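(* Let $p$ be a prime and let $A\subseteq\mathbb{Z}_p^2$ with $|A|=p-1+\mathrm{Ol}(\mathbb{Z}_p)$. Let $U\le\mathbb{Z}_p^2$ be a subgroup with $U\cong\mathbb{Z}_p$, let $B\subseteq A$, let $\pi:\mathbb{Z}_p^2\to\mathbb{Z}_p$ be a surjective homomorphism with kernel $U$, and let $x_1,\dots,x_p$ be representatives of the cosets of $U$ in $\mathbb{Z}_p^2$. For $x\in\mathbb{Z}_p^2$ and a set $C$ write $N(x,U,C)=|C\cap(x+U)|$. Suppose that every element of $\mathbb{Z}_p$ is the sum of some (possibly empty) sub-multiset of the multiset $\pi(B)=\{\pi(b):b\in B\}$, and that \[ \sum_{i=1}^{p}\left\lfloor \frac{N(x_i,U,A\setminus B)}{2}\right\rfloor\left\lceil \frac{N(x_i,U,A\setminus B)}{2}\right\rceil\geq p+1. \] Then $A$ contains a non-empty subset whose sum is $0$.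
   Context: $\mathrm{Ol}(\mathbb{Z}_p)$ denotes the smallest integer $k$ such that every set of $k$ distinct elements of $\mathbb{Z}_p$ contains a non-empty subset with sum $0$. *)

From HB Require Import structures.
From mathcomp Require Import all_boot all_order all_algebra.
Set Implicit Arguments. Unset Strict Implicit. Unset Printing Implicit Defensive.
Import GRing.Theory.
Local Open Scope ring_scope.

Definition Zp2 (p : nat) := ('Z_p * 'Z_p)%type.

Definition Ol_prop (p k : nat) : Prop :=
  forall S : {set 'Z_p}, #|S| = k ->
    exists T : {set 'Z_p}, [/\ T \subset S, T != set0 & \sum_(t in T) t = 0].

Definition is_Ol (p k : nat) : Prop :=
  Ol_prop p k /\ forall j, Ol_prop p j -> (k <= j)%N.

Definition coset2 (p : nat) (x : Zp2 p) (U : {set Zp2 p}) : {set Zp2 p} :=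
  [set x + u | u in U].

Definition Ncount (p : nat) (x : Zp2 p) (U C : {set Zp2 p}) : nat :=
  #|C :&: coset2 x U|.

From HB Require Import structures.
From mathcomp Require Import all_boot all_order all_algebra.
From mathcomp Require Import ring zify.
From mathcomp Require Import fingroup perm.
Import GRing.Theory.
Local Open Scope ring_scope.

Set Implicit Arguments. Unset Strict Implicit. Unset Printing Implicit Defensive.

(* Write the points of [A :\: B] in the coset [x i + U] as [x i + phi u] with
   [u] in a set [C i] of ['F_p], where [phi : 'F_p -> U] is an isomorphism,
   and let [k i] be half of [#|C i|], rounded down.  By the Dias da
   Silva--Hamidoune theorem the sums of [k i]-subsets of [C i] take at least
   [min(p, k i * (#|C i| - k i) + 1)] values, so by Cauchy--Davenport every
   element of ['F_p] is a sum over [i] of such subset sums.  Choose [SB] in [B]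
   with [pi] of its sum equal to [- pi (\sum_i x i *+ k i)]; then
   [\sum_i x i *+ k i + \sum SB] lies in [U], and choosing the [k i]-subsets
   to cancel it yields a non-empty zero-sum subset of [A].

   Both additive theorems are proved by the polynomial method of Alon,
   Nathanson and Ruzsa.  If [#|S i| = t i + 1], summing a polynomial of total
   degree [\sum_i t i] over the grid of the [S i], weighted by products of
   Lagrange weights, extracts its coefficient of [\prod_i 'X_i ^+ t i].  For
   the polynomial [\prod_(i < j) ('X_j - 'X_i) * q (\sum_i 'X_i)] (resp.
   [q ('X_0 + 'X_1)]), with [q] monic of small degree vanishing on the
   restricted sumset (resp. sumset), the grid sum vanishes while the
   coefficient is a non-zero multinomial expression modulo [p]. *)

Lemma eq_of_leq_sumn (I : finType) (a b : I -> nat) :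
  (forall i, a i <= b i)%N -> (\sum_i b i <= \sum_i a i)%N -> a =1 b.
Proof.
move=> le_ab le_sum i; have : (\sum_i (b i - a i) == 0)%N.
  by rewrite sumnB // subn_eq0.
rewrite sum_nat_eq0 => /forallP /(_ i) /=; rewrite subn_eq0 => le_ba.
by apply/eqP; rewrite eqn_leq le_ab.
Qed.

Section GridSum.
Variables (F : finFieldType) (K : nat) (t : 'I_K -> nat) (S : 'I_K -> {set F}).
Hypothesis card_S : forall i, #|S i| = (t i).+1.

Definition lagrange_weight i (c : F) := (\prod_(d <- enum (S i :\ c)) (c - d))^-1.

(* The weighted sum is the leading coefficient of the Lagrange interpolant of
   [X^e] on [S i], a polynomial of degree at most [t i]. *)
Lemma sum_lagrange_weight i e : (e <= t i)%N ->
  \sum_(c in S i) c ^+ e * lagrange_weight i c = (e == t i)%:R.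
Proof.
move=> le_et.
pose L c := \prod_(d <- enum (S i :\ c)) ('X - d%:P).
pose R := \sum_(c in S i) (c ^+ e * lagrange_weight i c) *: L c - 'X^e.
have size_L c : c \in S i -> size (L c) = (t i).+1.
  move=> cS; rewrite size_prod_XsubC -cardE.
  by move: (card_S i); rewrite (cardsD1 c) cS add1n.
have hornerL c c0 : (L c).[c0] = \prod_(d <- enum (S i :\ c)) (c0 - d).
  by rewrite horner_prod; apply: eq_bigr => d _; rewrite hornerXsubC.
have R0 : R = 0.
  apply: contraTeq (leqnn (size R)) => nzR; rewrite -ltnNge.
  have rootR : all (root R) (enum (S i)).
    apply/allP => c0; rewrite mem_enum => c0S.
    rewrite /root /R hornerD hornerN hornerXn horner_sum (bigD1 c0) //= big1.
      rewrite addr0 hornerZ hornerL -mulrA mulVf ?mulr1 ?subrr //.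
      rewrite prodf_seq_neq0; apply/allP => d; rewrite mem_enum !inE.
      by case/andP=> dc0 _; rewrite subr_eq0 eq_sym.
    move=> c /andP[_ cc0]; rewrite hornerZ hornerL.
    rewrite (bigD1_seq c0) /= ?subrr ?mul0r ?mulr0 ?enum_uniq //.
    by rewrite mem_enum !inE eq_sym cc0.
  apply: leq_trans (max_poly_roots nzR rootR (enum_uniq _)); rewrite -cardE card_S.
  rewrite ltnS; apply: leq_trans (size_polyD _ _) _.
  rewrite geq_max size_polyN size_polyXn ltnS le_et andbT.
  apply: leq_trans (size_sum _ _ _) _; apply/bigmax_leqP => c cS.
  by apply: leq_trans (size_scale_leq _ _) _; rewrite size_L.
have lead_L c : c \in S i -> (L c)`_(t i) = 1.
  move=> cS; have := monicP (monic_prod_XsubC (enum (S i :\ c)) xpredT id).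
  by rewrite lead_coefE -/(L c) size_L.
have : R`_(t i) = 0 by rewrite R0 coef0.
rewrite /R coefB coef_sum coefXn.
under eq_bigr => c cS do rewrite coefZ lead_L // mulr1.
by move/eqP; rewrite subr_eq0 => /eqP ->; rewrite eq_sym.
Qed.

Definition grid := family (fun i => mem (S i)).

Definition grid_sum (f : {ffun 'I_K -> F} -> F) :=
  \sum_(c in grid) (\prod_i lagrange_weight i (c i)) * f c.

Lemma grid_sum_eq0 f : (forall c, c \in grid -> f c = 0) -> grid_sum f = 0.
Proof. by move=> f0; apply: big1 => c /f0 ->; rewrite mulr0. Qed.

Definition grid_moment (e : 'I_K -> nat) j :=
  grid_sum (fun c => (\prod_i c i ^+ e i) * (\sum_i c i) ^+ j).

Definition bump (e : 'I_K -> nat) l i := (e i + (i == l))%N.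

Lemma sum_bump e l : (\sum_i bump e l i = \sum_i e i + 1)%N.
Proof.
rewrite big_split /=; congr (_ + _)%N.
by rewrite (bigD1 l) //= eqxx big1 // => i /negbTE ->.
Qed.

Lemma grid_moment0 e :
  grid_moment e 0 = \prod_i \sum_(c in S i) c ^+ e i * lagrange_weight i c.
Proof.
rewrite bigA_distr_big_dep; apply: eq_bigr => c _.
by rewrite expr0 mulr1 -big_split /=; under eq_bigr do rewrite mulrC.
Qed.

Lemma grid_momentS e j : grid_moment e j.+1 = \sum_l grid_moment (bump e l) j.
Proof.
rewrite /grid_moment /grid_sum exchange_big /=; apply: eq_bigr => c _.
rewrite -mulr_sumr; congr (_ * _).
rewrite exprSr mulrA mulr_sumr; apply: eq_big => // l _; rewrite mulrAC; congr (_ * _).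
rewrite (bigD1 l) //= [RHS](bigD1 l) //= /bump eqxx addn1 exprSr mulrAC.
by congr (_ * _); apply: eq_bigr => i /negbTE->; rewrite addn0.
Qed.

Hypothesis fact_t_neq0 : forall i a, (a <= t i)%N -> a`!%:R != 0 :> F.

Lemma natr_t_neq0 i a : (0 < a <= t i)%N -> a%:R != 0 :> F.
Proof.
case: a => // a /= /fact_t_neq0; rewrite factS natrM mulf_eq0 negb_or.
by case/andP.
Qed.

(* The coefficient of [\prod_i 'X_i ^+ (t i - e i)] in [(\sum_i 'X_i) ^+ j]. *)
Definition multinom_coef (e : 'I_K -> nat) j : F :=
  if ((\sum_i e i + j == \sum_i t i) && [forall i, e i <= t i])%N
  then j`!%:R / \prod_i ((t i - e i)`!)%:R else 0.

Lemma multinom_coef_bump e j l :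
  (\sum_i e i + j.+1 = \sum_i t i)%N -> (forall i, e i <= t i)%N ->
  multinom_coef (bump e l) j =
    (t l - e l)%:R * (j`!%:R / \prod_i ((t i - e i)`!)%:R).
Proof.
move=> sum_e le_et; rewrite /multinom_coef sum_bump -addnA add1n sum_e eqxx /=.
have [lt_el|] := ltnP (e l) (t l); last first.
  move=> le_te; rewrite (eqP (_ : t l - e l == 0)%N) ?subn_eq0 // mul0r.
  case: forallP => // /(_ l); rewrite /bump eqxx addn1 => lt_el.
  by move: le_te; rewrite leqNgt lt_el.
have le_bump : [forall i, bump e l i <= t i]%N.
  by apply/forallP => i; rewrite /bump; case: eqP => [->|_]; rewrite ?addn1 ?addn0.
rewrite le_bump (bigD1 l) //= [in RHS](bigD1 l) //= /bump eqxx addn1 subnS.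
rewrite -(prednK (_ : 0 < t l - e l)%N) ?subn_gt0 //= factS natrM.
rewrite (eq_bigr (fun i => ((t i - e i)`!)%:R)) => [|i /negbTE->]; last first.
  by rewrite addn0.
have nz_rest : \prod_(i | i != l) ((t i - e i)`!)%:R != 0 :> F.
  by apply/prodf_neq0 => i _; apply/fact_t_neq0/leq_subr.
have nz_pred : ((t l - e l).-1`!)%:R != 0 :> F.
  by apply/fact_t_neq0; apply: leq_trans (leq_pred _) (leq_subr _ _).
have nz_sub : (t l - e l)%:R != 0 :> F.
  by apply/natr_t_neq0; rewrite subn_gt0 lt_el; apply: leq_subr.
rewrite prednK ?subn_gt0 //; field.
by rewrite nz_rest nz_pred nz_sub.
Qed.

Lemma multinom_coefS e j : (\sum_i e i + j.+1 <= \sum_i t i)%N ->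
  multinom_coef e j.+1 = \sum_l multinom_coef (bump e l) j.
Proof.
move=> le_sum; have [/andP[/eqP sum_e /forallP le_et]|not_top] :=
  boolP ((\sum_i e i + j.+1 == \sum_i t i) && [forall i, e i <= t i])%N.
  rewrite [LHS]/multinom_coef sum_e eqxx /=.
  have -> : [forall i, e i <= t i]%N by apply/forallP.
  have coef_l l := multinom_coef_bump l sum_e le_et.
  rewrite (eq_bigr _ (fun l _ => coef_l l)).
  rewrite -mulr_suml -natr_sum sumnB // -sum_e addKn factS natrM; field.
  by apply/prodf_neq0 => i _; apply/fact_t_neq0/leq_subr.
rewrite /multinom_coef (negbTE not_top) big1 // => l _.
case: ifP => // /andP[]; rewrite sum_bump -addnA add1n => sum_e /forallP le_bump.
case/negP: not_top; rewrite sum_e /=; apply/forallP => i.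
by apply: leq_trans (le_bump i); rewrite /bump leq_addr.
Qed.

Lemma grid_moment0E e : (\sum_i e i <= \sum_i t i)%N ->
  grid_moment e 0 = multinom_coef e 0.
Proof.
move=> le_sum; rewrite grid_moment0 /multinom_coef addn0.
have [i lt_et|ge_et] := pickP (fun i => e i < t i)%N.
  rewrite (bigD1 i) //= (sum_lagrange_weight (ltnW lt_et)) (ltn_eqF lt_et) mul0r.
  case: ifP => // /andP[/eqP sum_e /forallP le_et].
  have := eq_of_leq_sumn le_et; rewrite sum_e leqnn => /(_ isT i) eq_et.
  by move: lt_et; rewrite eq_et ltnn.
have eq_te : t =1 e.
  by apply: eq_of_leq_sumn le_sum => i; rewrite leqNgt ge_et.
rewrite (eq_bigr (fun _ => 1)) => [|i _]; last first.
  by rewrite -eq_te (sum_lagrange_weight (leqnn _)) eqxx.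
rewrite (eq_bigr _ (fun i _ => esym (eq_te i))) eqxx /=.
have -> : [forall i, e i <= t i]%N by apply/forallP => i; rewrite -eq_te.
by rewrite big1_eq big1 ?invr1 ?mulr1 // => i _; rewrite -eq_te subnn.
Qed.

Lemma grid_momentE e j : (\sum_i e i + j <= \sum_i t i)%N ->
  grid_moment e j = multinom_coef e j.
Proof.
elim: j e => [|j IHj] e le_sum.
  by apply: grid_moment0E; rewrite -(addn0 (\sum_i e i)).
rewrite grid_momentS multinom_coefS //; apply: eq_bigr => l _.
by apply: IHj; rewrite sum_bump -addnA add1n.
Qed.

(* Only the top-degree part [(\sum_i 'X_i) ^+ m] of [q] contributes: lower
   powers have total degree below [\sum_i t i]. *)
Lemma grid_sum_poly (Idx : finType) (a : Idx -> F) (ex : Idx -> 'I_K -> nat)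
    D (q : {poly F}) m :
  (forall s, \sum_i ex s i = D)%N -> q \is monic -> size q = m.+1 ->
  (D + m = \sum_i t i)%N ->
  grid_sum (fun c => (\sum_s a s * \prod_i c i ^+ ex s i) * q.[\sum_i c i])
  = \sum_s a s * multinom_coef (ex s) m.
Proof.
move=> deg_ex mon_q size_q deg_sum; rewrite /grid_sum.
transitivity (\sum_(c in grid) \sum_s \sum_(j < m.+1) a s * q`_j *
   ((\prod_i lagrange_weight i (c i)) * ((\prod_i c i ^+ ex s i) * (\sum_i c i) ^+ j))).
  apply: eq_bigr => c _; rewrite (horner_coef_wide _ (eq_leq size_q)).
  rewrite mulr_suml mulr_sumr; apply: eq_bigr => s _.
  by rewrite mulr_sumr mulr_sumr; apply: eq_bigr => j _; ring.
rewrite exchange_big; apply: eq_bigr => s _; rewrite exchange_big /=.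
rewrite big_ord_recr /= big1 ?add0r => [|j _].
  have -> : q`_m = 1 by have := monicP mon_q; rewrite lead_coefE size_q.
  rewrite mulr1 -mulr_sumr -[\sum_(c in grid) _]/(grid_moment (ex s) m).
  by rewrite grid_momentE // deg_ex deg_sum.
rewrite -mulr_sumr -[\sum_(c in grid) _]/(grid_moment (ex s) j).
rewrite grid_momentE; last first.
  by rewrite deg_ex -deg_sum leq_add2l ltnW.
by rewrite /multinom_coef deg_ex -deg_sum eqn_add2l (ltn_eqF (ltn_ord j)) mulr0.
Qed.

End GridSum.

Section CharP.
Variables (F : fieldType) (p : nat).
Hypotheses (p_pr : prime p) (charFp : p \in [pchar F]).

Lemma natr_neq0_lt a : (0 < a < p)%N -> a%:R != 0 :> F.
Proof. by case/andP=> a_gt0 lt_ap; rewrite -(dvdn_pcharf charFp) gtnNdvd. Qed.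

Lemma fact_neq0_lt a : (a < p)%N -> a`!%:R != 0 :> F.
Proof.
rewrite -(dvdn_pcharf charFp); elim: a => [|a IHa] lt_ap.
  by rewrite fact0 dvdn1 neq_ltn prime_gt1 ?orbT.
by rewrite factS Euclid_dvdM // negb_or IHa ?(ltnW lt_ap) // gtnNdvd.
Qed.

Lemma natr_inj_lt a b : (a < p)%N -> (b < p)%N -> a%:R = b%:R :> F -> a = b.
Proof.
wlog le_ab : a b / (a <= b)%N => [WL lt_ap lt_bp eq_ab|lt_ap lt_bp eq_ab].
  by case: (leqP a b) => [|/ltnW] le; [|apply/esym]; apply: WL.
apply/eqP; rewrite eqn_leq le_ab leqNgt; apply: contraTN isT => lt_ab.
have : (b - a)%:R != 0 :> F.
  by apply: natr_neq0_lt; rewrite subn_gt0 lt_ab (leq_ltn_trans (leq_subr _ _)).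
by rewrite natrB ?(ltnW lt_ab) // eq_ab subrr eqxx.
Qed.

Lemma prod_sub_natr_inv_fact n j : (n < p)%N ->
  (\prod_(r < j) (n%:R - r%:R)) / n`!%:R =
    if (j <= n)%N then (n - j)`!%:R^-1 else 0 :> F.
Proof.
move=> lt_np; case: ifP => [le_jn|/negbT]; last first.
  by rewrite -ltnNge => lt_nj; rewrite (bigD1 (Ordinal lt_nj)) //= subrr !mul0r.
have -> : \prod_(r < j) (n%:R - r%:R) = (n ^_ j)%:R :> F.
  rewrite ffact_prod natr_prod; apply: eq_bigr => r _.
  by rewrite natrB // (leq_trans (ltnW (ltn_ord r))).
have nz_sub : (n - j)`!%:R != 0 :> F.
  exact/fact_neq0_lt/(leq_ltn_trans (leq_subr _ _)).
apply: (mulfI nz_sub); rewrite mulfV // mulrA -natrM mulnC ffact_fact // mulfV //.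
exact: fact_neq0_lt.
Qed.

Definition inv_fact_mx k (t : 'I_k -> nat) : 'M[F]_k :=
  \matrix_(i, j) if (j <= t i)%N then (t i - j)`!%:R^-1 else 0.

(* [inv_fact_mx t] is a diagonal matrix times a Vandermonde matrix in the
   [t i] times a unitriangular matrix of falling-factorial coefficients. *)
Lemma det_inv_fact_mx_neq0 k (t : 'I_k -> nat) :
  injective t -> (forall i, t i < p)%N -> \det (inv_fact_mx t) != 0.
Proof.
move=> inj_t lt_tp.
pose P j := \prod_(r < j) ('X - r%:R%:P) : {poly F}.
have size_P j : size (P j) = j.+1.
  by rewrite size_prod_XsubC -[index_enum _]enumT -cardT card_ord.
pose D := diag_mx (\row_i (t i)`!%:R^-1) : 'M[F]_k.
pose V := (Vandermonde k (\row_i (t i)%:R : 'rV[F]_k))^T.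
pose Q := \matrix_(l, j) (P j)`_l : 'M[F]_k.
have -> : inv_fact_mx t = D *m (V *m Q).
  apply/matrixP => i j; rewrite mul_diag_mx !mxE.
  under eq_bigr => l _ do rewrite !mxE mulrC.
  rewrite -(horner_coef_wide _ (_ : size (P j) <= k)%N) ?size_P //.
  rewrite horner_prod mulrC -prod_sub_natr_inv_fact //.
  by congr (_ * _); apply: eq_bigr => r _; rewrite hornerXsubC.
have det_Q : \det Q = 1.
  rewrite -det_tr det_trig; last first.
    by apply/forallP => i; apply/forallP => j; apply/implyP => lt_ij;
      rewrite !mxE nth_default // size_P.
  apply: big1 => i _; rewrite !mxE.
  have /monicP : P i \is monic by apply: monic_prod_XsubC.
  by rewrite lead_coefE size_P.
rewrite !det_mulmx det_Q mulr1 det_diag det_tr det_Vandermonde mulf_neq0 //.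
  by apply/prodf_neq0 => i _; rewrite mxE invr_eq0 fact_neq0_lt.
apply/prodf_neq0 => i _; apply/prodf_neq0 => j lt_ij; rewrite !mxE subr_eq0.
apply: contraTneq lt_ij => /(natr_inj_lt (lt_tp _) (lt_tp _)) /inj_t ->.
by rewrite ltnn.
Qed.

End CharP.

Lemma sum_nat_ge_ord k r : (r <= k)%N -> (\sum_(i < k) (k - r <= i) = r)%N.
Proof.
move=> le_rk; rewrite -(big_mkord xpredT (fun i => (k - r <= i)%N : nat)).
rewrite (@big_cat_nat _ _ _ (k - r) 0 k _ _ (leq0n _) (leq_subr r k)) /=.
rewrite big_nat_cond big1 ?add0n => [|i /andP[/andP[_ lt_i] _]]; last first.
  by rewrite leqNgt lt_i.
rewrite big_nat_cond (eq_bigr (fun _ => 1%N)) => [|i /andP[/andP[-> _] _]] //.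
by rewrite -big_nat_cond sum_nat_const_nat muln1 subKn.
Qed.

(* Writing [m = q (k + 1) + r], the exponents are [i + q], raised by one for
   the last [r] indices. *)
Lemma exists_exponents k n m : (k < n)%N -> (m <= k.+1 * (n - k.+1))%N ->
  exists t : 'I_k.+1 -> nat,
    [/\ injective t, forall i, (t i < n)%N & (\sum_i t i = \sum_(i < k.+1) i + m)%N].
Proof.
move=> lt_kn le_m; pose q := (m %/ k.+1)%N; pose r := (m %% k.+1)%N.
have def_m : m = (q * k.+1 + r)%N := divn_eq m k.+1.
have lt_rk : (r < k.+1)%N by rewrite ltn_mod.
have le_q : (q + (0 < r) <= n - k.+1)%N.
  have [r0|r_gt0] := posnP r.
    rewrite addn0 -(leq_pmul2r (ltn0Sn k)) [X in (_ <= X)%N]mulnC.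
    by apply: leq_trans le_m; rewrite def_m r0 addn0.
  rewrite addn1 -(ltn_pmul2r (ltn0Sn k)) [X in (_ < X)%N]mulnC.
  by apply: leq_trans le_m; rewrite def_m -addn1 leq_add2l.
pose t (i : 'I_k.+1) := (i + q + (k.+1 - r <= i))%N.
have sum_t : (\sum_i t i = \sum_(i < k.+1) i + m)%N.
  rewrite !big_split /= (sum_nat_ge_ord (ltnW lt_rk)) sum_nat_const card_ord.
  by rewrite def_m mulnC addnA.
have homo_t (i j : 'I_k.+1) : (i < j)%N -> (t i < t j)%N.
  move=> lt_ij; rewrite /t -!addSn; apply: leq_add; first by rewrite leq_add2r.
  by case: (leqP (k.+1 - r) i) => // le_i; rewrite (leq_trans le_i (ltnW lt_ij)).
clear le_m def_m; clearbody q r; exists t; split=> //.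
  move=> i j eq_t; apply: val_inj.
  by case: (ltngtP i j) => // /homo_t; rewrite eq_t ltnn.
move=> i; by have := ltn_ord i; rewrite /t; case: (posnP r) => [->|_]; lia.
Qed.

Lemma subset_of_card (T : finType) (C : {set T}) a : (a <= #|C|)%N ->
  exists2 D : {set T}, D \subset C & #|D| = a.
Proof.
move=> le_aC; exists [set x in take a (enum C)].
  by apply/subsetP => x; rewrite inE => /mem_take; rewrite mem_enum.
rewrite cardsE; move/card_uniqP: (take_uniq a (enum_uniq (mem C))) => ->.
by rewrite size_takel // -cardE.
Qed.

Lemma monic_vanishing_poly (F : finFieldType) (R : {set F}) m : (#|R| <= m)%N ->
  exists q : {poly F}, [/\ q \is monic, size q = m.+1 & forall r, r \in R -> q.[r] = 0].
Proof.
move=> le_Rm; exists ((\prod_(r <- enum R) ('X - r%:P)) * 'X^(m - #|R|)).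
have mon_prod : \prod_(r <- enum R) ('X - r%:P) \is monic := monic_prod_XsubC _ _ _.
split; first by rewrite monicMr ?monicXn.
  rewrite size_Mmonic ?monicXn ?monic_neq0 // size_prod_XsubC size_polyXn -cardE.
  by rewrite addSn addnS subnKC.
move=> r r_R; rewrite hornerM horner_prod (bigD1_seq r) ?mem_enum ?enum_uniq //=.
by rewrite hornerXsubC subrr !mul0r.
Qed.

Section Sumsets.
Variables (F : finFieldType) (p : nat).
Hypotheses (p_pr : prime p) (charFp : p \in [pchar F]).

Definition restricted_sumset (C : {set F}) k :=
  [set \sum_(x in T) x | T : {set F} in [set T : {set F} | T \subset C & #|T| == k]].

Lemma sum_perm_ord k (s : 'S_k) : (\sum_i s i = \sum_(i < k) i)%N.
Proof. by rewrite [RHS](reindex_inj (@perm_inj _ s)). Qed.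

Lemma alt_sum_multinom_coef k (t : 'I_k -> nat) m :
  (\sum_(i < k) i + m = \sum_i t i)%N ->
  \sum_(s : 'S_k) (-1) ^+ s * multinom_coef F t (fun i => s i) m
    = m`!%:R * \det (inv_fact_mx F t).
Proof.
move=> sum_t; rewrite /determinant mulr_sumr; apply: eq_bigr => s _.
rewrite mulrCA; congr (_ * _); rewrite /multinom_coef sum_perm_ord sum_t eqxx /=.
case: ifP => [/forallP le_st|/negbT]; last first.
  rewrite negb_forall => /existsP[i lt_ts].
  by rewrite (bigD1 i) //= mxE (negbTE lt_ts) mul0r mulr0.
by rewrite -prodfV; congr (_ * _); apply: eq_bigr => i _; rewrite mxE le_st.
Qed.

Lemma restricted_sumset_card (C : {set F}) k m :
  (#|C| <= p)%N -> (k <= #|C|)%N -> (m < p)%N -> (m <= k * (#|C| - k))%N ->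
  (m < #|restricted_sumset C k|)%N.
Proof.
move=> le_Cp le_kC lt_mp le_m; rewrite ltnNge; apply/negP => small.
case: k => [|k] in le_kC le_m small *.
  have : 0 \in restricted_sumset C 0.
    by apply/imsetP; exists set0; rewrite ?inE ?sub0set ?cards0 ?big_set0.
  move: le_m small; rewrite mul0n leqn0 => /eqP->.
  by rewrite leqn0 cards_eq0 => /eqP->; rewrite inE.
have [t [inj_t lt_tC sum_t]] := exists_exponents le_kC le_m.
have [S S_C card_S] : exists2 S : 'I_k.+1 -> {set F},
    forall i, S i \subset C & forall i, #|S i| = (t i).+1.
  have ex_S i : exists D : {set F}, D \subset C /\ #|D| = (t i).+1.
    by have [D] := subset_of_card (lt_tC i); exists D.
  by have [S SP] := fin_all_exists ex_S; exists S => i; case: (SP i).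
have lt_tp i : (t i < p)%N := leq_trans (lt_tC i) le_Cp.
have fact_t i a : (a <= t i)%N -> a`!%:R != 0 :> F.
  by move=> le_a; apply: fact_neq0_lt (leq_ltn_trans le_a (lt_tp i)).
have [q [mon_q size_q q_R]] := monic_vanishing_poly small.
have := grid_sum_poly card_S fact_t (fun s : 'S_k.+1 => (-1) ^+ s)
  (ex := fun s i => s i) (@sum_perm_ord k.+1) mon_q size_q (esym sum_t).
rewrite alt_sum_multinom_coef ?(esym sum_t) //.
rewrite grid_sum_eq0 => [/esym/eqP|c /familyP c_S].
  apply/negP; rewrite mulf_neq0 ?(fact_neq0_lt p_pr charFp) //.
  by rewrite (det_inv_fact_mx_neq0 p_pr).
have -> : \sum_(s : 'S_k.+1) (-1) ^+ s * \prod_i c i ^+ s i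
          = \det (\matrix_(i, j) c i ^+ j : 'M[F]_k.+1).
  by apply: eq_bigr => s _; congr (_ * _); apply: eq_bigr => i _; rewrite mxE.
have [/injectiveP inj_c|/injectivePn[i [j ne_ij eq_c]]] := boolP (injectiveb c).
  rewrite q_R ?mulr0 //; apply/imsetP; exists [set c i | i : 'I_k.+1].
    rewrite inE card_imset // card_ord eqxx andbT.
    by apply/subsetP => _ /imsetP[i _ ->]; apply/(subsetP (S_C i))/c_S.
  by rewrite big_imset //= => i j _ _ /inj_c.
by rewrite (determinant_alternate ne_ij) ?mul0r // => l; rewrite !mxE eq_c.
Qed.

Definition sumset (X Y : {set F}) := [set x + y | x in X, y in Y].

Lemma sumset_card_small (X Y : {set F}) a b :
  #|X| = a.+1 -> #|Y| = b.+1 -> (a + b < p)%N -> (a + b < #|sumset X Y|)%N.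
Proof.
move=> card_X card_Y lt_abp; rewrite ltnNge; apply/negP => small.
pose t (i : 'I_2) := if i == ord0 then a else b.
pose S (i : 'I_2) := if i == ord0 then X else Y.
have card_S i : #|S i| = (t i).+1 by rewrite /S /t; case: ifP.
have fact_t i c : (c <= t i)%N -> c`!%:R != 0 :> F.
  move=> le_c; apply: (fact_neq0_lt p_pr charFp); apply: leq_ltn_trans lt_abp.
  by apply: leq_trans le_c _; rewrite /t; case: ifP => _; rewrite ?leq_addr ?leq_addl.
have sum_t : (\sum_i t i = a + b)%N by rewrite big_ord_recl big_ord1.
have [q [mon_q size_q q_R]] := monic_vanishing_poly small.
have := grid_sum_poly card_S fact_t (fun _ : 'I_1 => 1) (ex := fun _ _ => 0%N)
  (fun _ => big1_eq _ _) mon_q size_q (esym sum_t).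
rewrite grid_sum_eq0 => [|c /familyP c_S]; last first.
  rewrite q_R ?mulr0 // big_ord_recl big_ord1.
  by apply/imset2P; exists (c ord0) (c (lift ord0 ord0)); [apply: c_S..|].
rewrite big_ord1 mul1r /multinom_coef big1_eq add0n sum_t eqxx /=.
rewrite (_ : [forall i, 0 <= t i]%N); last by apply/forallP.
move/esym/eqP; apply/negP; rewrite mulf_neq0 ?invr_eq0 ?(fact_neq0_lt p_pr) //.
by apply/prodf_neq0 => i _; rewrite subn0 (fact_t i).
Qed.

Lemma sumset_card (X Y : {set F}) : #|F| = p -> X != set0 -> Y != set0 ->
  (minn p (#|X| + #|Y|).-1 <= #|sumset X Y|)%N.
Proof.
move=> card_F; rewrite -!card_gt0 => X_gt0 Y_gt0.
move: X_gt0 Y_gt0 (max_card (mem X)); rewrite card_F.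
case def_a : #|X| => [//|a] _; case def_b : #|Y| => [//|b] _ lt_ap.
rewrite addSn addnS /=; have [lt_abp|le_pab] := ltnP (a + b) p.
  by rewrite (minn_idPr lt_abp) sumset_card_small.
rewrite (minn_idPl (leqW le_pab)).
have le_Y : ((p - a.+1).+1 <= #|Y|)%N by rewrite def_b; lia.
have [Y' sub_Y' card_Y'] := subset_of_card le_Y.
have eq_p : (a + (p - a.+1)).+1 = p by lia.
have := sumset_card_small def_a card_Y' (eq_leq eq_p); rewrite eq_p => /leq_trans.
by apply; apply/subset_leq_card/imset2Sr.
Qed.

Lemma card_big_sumset (I : Type) (r : seq I) (X : I -> {set F}) (b : I -> nat) :
  #|F| = p -> (forall i, minn p (b i).+1 <= #|X i|)%N ->
  (minn p (\sum_(i <- r) b i).+1 <= #|\big[sumset/[set 0%R]]_(i <- r) X i|)%N.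
Proof.
move=> card_F le_X; have p_gt0 := prime_gt0 p_pr.
elim: r => [|i r IHr]; first by rewrite !big_nil cards1 geq_minr.
rewrite !big_cons; set Z := \big[_/_]_(j <- r) X j in IHr *.
have nonempty n (A : {set F}) : (minn p n.+1 <= #|A|)%N -> A != set0.
  by rewrite -card_gt0; apply: leq_trans; rewrite leq_min p_gt0.
apply: leq_trans (sumset_card card_F (nonempty _ _ (le_X i)) (nonempty _ _ IHr)).
move: (le_X i) IHr; move: #|X i| #|Z| (b i) (\sum_(j <- r) b j) => x z bi s; lia.
Qed.

Lemma mem_big_sumset (I : finType) (X : I -> {set F}) z :
  z \in \big[sumset/[set 0%R]]_i X i ->
  exists y : I -> F, (forall i, y i \in X i) /\ z = \sum_i y i.
Proof.
suff /(_ _ (index_enum_uniq I)) sub_r (r : seq I) : uniq r ->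
    z \in \big[sumset/[set 0%R]]_(i <- r) X i ->
    exists y : I -> F, (forall i, i \in r -> y i \in X i) /\ z = \sum_(i <- r) y i.
  by case/sub_r => y [X_y ->]; exists y; split=> // i; apply/X_y/mem_index_enum.
elim: r z => [|i r IHr] z /=.
  by rewrite big_nil inE => _ /eqP->; exists (fun=> 0); rewrite big_nil.
case/andP=> i_r uniq_r; rewrite big_cons.
case/imset2P=> x w X_x /(IHr _ uniq_r)[y [X_y ->]] ->.
exists (fun j => if j == i then x else y j); split.
  by move=> j; rewrite inE; case: eqP => [->|_ /X_y].
rewrite big_cons eqxx; congr (_ + _); apply: eq_big_seq => j j_r.
by case: eqP j_r => // ->; rewrite (negbTE i_r).
Qed.

Lemma restricted_sums_cover (I : finType) (C : I -> {set F}) (k : I -> nat) z :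
  #|F| = p -> (forall i, k i <= #|C i|)%N ->
  (p.-1 <= \sum_i k i * (#|C i| - k i))%N ->
  exists T : I -> {set F},
    (forall i, T i \subset C i /\ #|T i| = k i) /\ z = \sum_i \sum_(x in T i) x.
Proof.
move=> card_F le_kC le_p; have p_gt0 := prime_gt0 p_pr.
have card_R i : (minn p (k i * (#|C i| - k i)).+1 <=
                 #|restricted_sumset (C i) (k i)|)%N.
  have le_Cp : (#|C i| <= p)%N by rewrite -card_F max_card.
  apply: leq_trans (restricted_sumset_card (m := minn p.-1 (k i * (#|C i| - k i)))
    le_Cp (le_kC i) _ (geq_minr _ _)); first by rewrite -minnSS prednK.
  by rewrite (leq_ltn_trans (geq_minl _ _)) // prednK.
have le_pS : (p <= (\sum_i k i * (#|C i| - k i)).+1)%N.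
  by rewrite -(prednK p_gt0) ltnS.
have := card_big_sumset (index_enum I) card_F card_R.
rewrite (minn_idPl le_pS) -card_F => le_F.
have full : \big[sumset/[set 0]]_i restricted_sumset (C i) (k i) = setT.
  by apply/eqP; rewrite eqEcard subsetT cardsT.
have [y [R_y ->]] : exists y : I -> F,
    (forall i, y i \in restricted_sumset (C i) (k i)) /\ z = \sum_i y i.
  by apply: mem_big_sumset; rewrite full inE.
have ex_T i : exists T : {set F},
    (T \subset C i /\ #|T| = k i) /\ y i = \sum_(x in T) x.
  by case/imsetP: (R_y i) => T; rewrite inE => /andP[sub_T /eqP card_T] ->; exists T.
have [T T_P] := fin_all_exists ex_T; exists T; split=> [i|]; first by case: (T_P i).
by apply: eq_bigr => i _; case: (T_P i).
Qed.

End Sumsets.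

Section FpZp.
Variables (p : nat) (p_pr : prime p).

Definition Fp_to_Zp (a : 'F_p) : 'Z_p :=
  cast_ord (congr1 (fun n => n.+2) (Fp_Zcast p_pr)) a.

Lemma Fp_to_Zp_is_nmod_morphism : nmod_morphism Fp_to_Zp.
Proof.
split=> [|a b]; apply: val_inj => //=.
by have e := Fp_Zcast p_pr; congr ((_ %% _.+2)%N).
Qed.

HB.instance Definition _ :=
  GRing.isNmodMorphism.Build 'F_p 'Z_p Fp_to_Zp Fp_to_Zp_is_nmod_morphism.

Lemma Fp_to_Zp_bij : bijective Fp_to_Zp.
Proof.
by exists (cast_ord (esym (congr1 (fun n => n.+2) (Fp_Zcast p_pr)))) => a;
  apply: val_inj.
Qed.

Lemma Fp_param (U : {set Zp2 p}) :
  (exists f : {additive 'Z_p -> Zp2 p}, injective f /\ U = [set f a | a : 'Z_p]) ->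
  exists phi : {additive 'F_p -> Zp2 p}, injective phi /\ U = [set phi a | a : 'F_p].
Proof.
case=> f [inj_f ->]; have [g FZK ZFK] := Fp_to_Zp_bij.
exists (f \o Fp_to_Zp : {additive 'F_p -> Zp2 p}); split.
  exact: inj_comp inj_f (can_inj FZK).
apply/setP => y; apply/imsetP/imsetP => -[a _ ->]; last by exists (Fp_to_Zp a).
by exists (g a); rewrite //= ZFK.
Qed.

End FpZp.

Lemma exists_gt0_sum_muln (I : finType) (f g : I -> nat) :
  (0 < \sum_i f i * g i)%N -> exists i, (0 < f i)%N.
Proof.
rewrite lt0n sum_nat_eq0 negb_forall => /existsP[i].
by rewrite muln_eq0 negb_or -lt0n => /andP[f_gt0 _]; exists i.
Qed.

Lemma sum_setU_disjoint (T : finType) (V : nmodType) (X Y : {set T}) (f : T -> V) :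
  [disjoint X & Y] -> \sum_(t in X :|: Y) f t = \sum_(t in X) f t + \sum_(t in Y) f t.
Proof.
by move=> disj; rewrite (eq_bigl [predU X & Y]) ?bigU // => t; rewrite !inE.
Qed.

Lemma subn_half n : (n - n./2 = uphalf n)%N.
Proof. by rewrite -{1}(odd_double_half n) uphalf_half -addnn addnA addnK. Qed.

Section Cosets.
Variables (p : nat) (F : finZmodType) (phi : {additive F -> Zp2 p}).
Hypothesis inj_phi : injective phi.
Variable U : {set Zp2 p}.
Hypothesis def_U : U = [set phi a | a : F].

Lemma Ncount_fibre y (D : {set Zp2 p}) :
  Ncount y U D = #|[set u | y + phi u \in D]|.
Proof.
have inj_y : injective (fun u => y + phi u) by move=> u v /addrI /inj_phi.
rewrite /Ncount -(card_imset _ inj_y).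
apply: eq_card => z; rewrite in_setI /coset2 def_U; apply/andP/imsetP.
  by case=> z_D /imsetP[_ /imsetP[u _ ->] eq_z]; exists u; rewrite // inE -eq_z.
case=> u; rewrite inE => u_D ->; split=> //.
by apply/imsetP; exists (phi u); rewrite ?imset_f.
Qed.

Variables (I : finType) (x : I -> Zp2 p).
Hypothesis reps : forall i j, x j \in coset2 (x i) U -> i = j.

Definition coset_point (ij : I * F) := x ij.1 + phi ij.2.

Lemma coset_point_inj : injective coset_point.
Proof.
move=> [i u] [j v]; rewrite /coset_point /= => eq_x; have eq_ij : i = j.
  apply: reps; apply/imsetP; exists (phi (u - v)); first by rewrite def_U imset_f.
  by rewrite raddfB addrA eq_x addrK.
by move: eq_x; rewrite eq_ij => /addrI /inj_phi ->.
Qed.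

Definition coset_lift (T : I -> {set F}) : {set Zp2 p} :=
  coset_point @: [set ij : I * F | ij.2 \in T ij.1].

Lemma sum_coset_lift (T : I -> {set F}) :
  \sum_(g in coset_lift T) g = \sum_i x i *+ #|T i| + phi (\sum_i \sum_(u in T i) u).
Proof.
rewrite big_imset /=; last by move=> ? ? _ _ /coset_point_inj.
transitivity (\sum_i \sum_(u in T i) (x i + phi u)).
  by rewrite pair_big_dep; apply: eq_bigl => -[i u]; rewrite inE.
rewrite raddf_sum -big_split /=.
by apply: eq_bigr => i _; rewrite big_split sumr_const raddf_sum.
Qed.

Lemma coset_lift_sub (A : {set Zp2 p}) (T : I -> {set F}) :
  (forall i, T i \subset [set u | x i + phi u \in A]) -> coset_lift T \subset A.
Proof.
move=> sub_T; apply/subsetP => _ /imsetP[[i u] /[!inE] /= u_T ->].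
by have := subsetP (sub_T i) u u_T; rewrite inE.
Qed.

Lemma coset_lift_neq0 (T : I -> {set F}) i : T i != set0 -> coset_lift T != set0.
Proof.
case/set0Pn=> u u_T; apply/set0Pn; exists (x i + phi u).
by apply/imsetP; exists (i, u); rewrite ?inE.
Qed.

End Cosets.

Theorem lemma5 (p : nat) (pr_p : prime p) (ol : nat) (hol : is_Ol p ol)
  (A : {set Zp2 p}) (hA : #|A| = (p.-1 + ol)%N)
  (U : {set Zp2 p})
  (hU : exists f : {additive 'Z_p -> Zp2 p},
          injective f /\ U = [set f a | a : 'Z_p])
  (B : {set Zp2 p}) (hBA : B \subset A)
  (pi : {additive Zp2 p -> 'Z_p}) (hpi_surj : forall z : 'Z_p, exists y, pi y = z)
  (hpi_ker : forall y, (pi y == 0) = (y \in U))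
  (x : 'I_p -> Zp2 p)
  (hx_cover : forall y : Zp2 p, exists i, y \in coset2 (x i) U)
  (hx_distinct : forall i j, x j \in coset2 (x i) U -> i = j)
  (hB : forall z : 'Z_p, exists S : {set Zp2 p},
          S \subset B /\ \sum_(b in S) pi b = z)
  (hsum : (p.+1 <= \sum_(i < p)
             (Ncount (x i) U (A :\: B))./2 * uphalf (Ncount (x i) U (A :\: B)))%N) :
  exists S : {set Zp2 p}, [/\ S \subset A, S != set0 & \sum_(s in S) s = 0].
Proof.
have [phi [inj_phi U_phi]] := Fp_param pr_p hU.
pose C i := [set u | x i + phi u \in A :\: B]; pose k i := #|C i|./2.
have le_kC i : (k i <= #|C i|)%N by rewrite leq_half_double -addnn leqW ?leq_addr.
have {}hsum : (p.+1 <= \sum_i k i * (#|C i| - k i))%N.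
  apply: leq_trans hsum (eq_leq (eq_bigr _ _)) => i _.
  by rewrite (Ncount_fibre inj_phi U_phi) subn_half.
have [i0 k_gt0] := exists_gt0_sum_muln (leq_trans (ltn0Sn p) hsum).
pose s0 := \sum_i x i *+ k i.
have [SB [SB_B sum_SB]] := hB (- pi s0).
have [z def_z] : exists z, s0 + \sum_(b in SB) b = phi z.
  have : s0 + \sum_(b in SB) b \in U.
    by rewrite -hpi_ker raddfD [pi (\sum_(b in SB) b)]raddf_sum sum_SB subrr.
  by rewrite U_phi => /imsetP[z _ ->]; exists z.
have [T [T_C sum_T]] := restricted_sums_cover pr_p (pchar_Fp pr_p) (- z)
  (card_Fp pr_p) le_kC (leq_trans (leq_pred _) (ltnW hsum)).
have lift_AB : coset_lift phi x T \subset A :\: B.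
  by apply: coset_lift_sub => i; case: (T_C i).
exists (coset_lift phi x T :|: SB); split.
- by rewrite subUset (subset_trans lift_AB (subsetDl _ _)) (subset_trans SB_B hBA).
- have T_i0 : T i0 != set0 by rewrite -card_gt0; case: (T_C i0) => _ ->.
  by rewrite setU_eq0 negb_and (coset_lift_neq0 _ _ T_i0).
rewrite sum_setU_disjoint; last first.
  by apply: disjointW lift_AB SB_B _; rewrite disjoints_subset setDE subsetIr.
rewrite (sum_coset_lift inj_phi U_phi hx_distinct) -sum_T.
rewrite (eq_bigr (fun i => x i *+ k i)) => [|i _]; last by case: (T_C i) => _ ->.
by rewrite -/s0 addrAC def_z !raddfN subrr.
Qed.
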